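(* Let the Mathieu group $M_{12}$ act (sharply $5$-transitively) on a $12$-element set $\Omega$, with a distinguished point $F\in\Omega$. Then (a) $hd((M_{12})^{\triangle}_{-})\geq 6$; (b) $M(11,6)\geq |M_{12}|=95040$; (c) $M(10,6)\geq 8640$.
   Context: $hd(\pi,\sigma)$ is the number of points at which permutations $\pi,\sigma$ differ; $hd(A)$ is the minimum over distinct pairs in $A$. For a permutation $\pi$ of $\Omega$, $\pi^{\triangle}$ is defined by $\pi^{\triangle}(\pi^{-1}(F))=\pi(F)$, $\pi^{\triangle}(F)=F$, $\pi^{\triangle}(x)=\pi(x)$ otherwise; $\pi^{\triangle}_{-}$ is its restriction to $\Omega\setminus\{F\}$; for a set $S$ of permutations, $S^{\triangle}_{-}=\{\pi^{\triangle}_{-}:\pi\in S\}$. $M(n,d)$ is the maximum size of a set of permutations of an $n$-element set with pairwise Hamming distance at least $d$. *)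

From HB Require Import structures.
From mathcomp Require Import all_boot all_order all_fingroup.
Set Implicit Arguments. Unset Strict Implicit. Unset Printing Implicit Defensive.

Section Defs.
Variable T : finType.

Definition hd (p q : {perm T}) : nat := #|[set x | p x != q x]|.

Definition sharply_transitive (k : nat) (G : {set {perm T}}) : Prop :=
  forall x y : 'I_k -> T, injective x -> injective y ->
    exists! g : {perm T}, g \in G /\ forall i, g (x i) = y i.

Variable F : T.

Definition tri_fun (p : {perm T}) (x : T) : T :=
  if x == F then F else if x == (p^-1)%g F then p F else p x.

Lemma tri_funE p x : tri_fun p x = p (tperm F ((p^-1)%g F) x).
Proof.
rewrite /tri_fun; case: tpermP => [->|->|]; rewrite ?eqxx ?permKV //.
- case: eqP => // e; by rewrite -{2}e permKV.
- by move=> /eqP/negbTE -> /eqP/negbTE ->.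
Qed.

Lemma tri_fun_inj p : injective (tri_fun p).
Proof. by move=> x y; rewrite !tri_funE => /perm_inj /perm_inj. Qed.

Definition tri (p : {perm T}) : {perm T} := perm (@tri_fun_inj p).

Lemma tri_F p : tri p F = F.
Proof. by rewrite permE /tri_fun eqxx. Qed.

Definition OmF := {x : T | x != F}.

Lemma tri_OmF p (x : OmF) : tri p (val x) != F.
Proof.
have hx : val x != F := valP x.
apply: contra hx => /eqP e; apply/eqP; apply: (@perm_inj _ (tri p)).
by rewrite e tri_F.
Qed.

Definition trim_fun (p : {perm T}) (x : OmF) : OmF := exist (fun y => y != F) _ (tri_OmF p x).

Lemma trim_fun_inj p : injective (trim_fun p).
Proof. by move=> x y /(congr1 val) /= /perm_inj /val_inj. Qed.

Definition trim (p : {perm T}) : {perm OmF} := perm (@trim_fun_inj p).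

End Defs.

Definition perm_code (n d : nat) (A : {set {perm 'I_n}}) : bool :=
  [forall p in A, forall q in A, (p != q) ==> (d <= hd p q)].

Definition Mnd (n d : nat) : nat :=
  \max_(A : {set {perm 'I_n}} | perm_code d A) #|A|.

From HB Require Import structures.
From mathcomp Require Import all_boot all_order all_fingroup all_solvable zify.

(* Two distinct elements p, q of a sharply 5-transitive group agree on at most
   four points, and passing to p^triangle, q^triangle creates new agreements
   only at F, p^-1 F and q^-1 F.  Seven agreements would thus need exactly four
   old ones and a 3-cycle (F, p^-1 F, q^-1 F) of p q^-1; the cube of p q^-1 then
   fixes five points, so it is trivial, and an element of order 3 on 12 points
   fixes a multiple of 3 points, not 4.  Hence (M12)^triangle_- is a code of
   length 11, distance 6 and size 12 * 11 * 10 * 9 * 8 = 95040.  Keeping the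
   codewords with the most frequent value at one coordinate, moving that value
   to a fixed point and deleting it, leaves a code of length 10 with at least
   95040 / 11 = 8640 words. *)

Set Implicit Arguments.
Unset Strict Implicit.
Unset Printing Implicit Defensive.

Section SharpTransitivity.
Variable T : finType.

Lemma exists_inj_ord (A : {pred T}) k :
  k <= #|A| -> exists2 x : 'I_k -> T, injective x & forall i, x i \in A.
Proof.
move=> kA; exists (fun i => enum_val (widen_ord kA i)) => [i j|i].
  by move=> /enum_val_inj/(congr1 val) /= /val_inj.
exact: enum_valP.
Qed.

Variables (k : nat) (G : {set {perm T}}).
Hypothesis STG : sharply_transitive k G.

Lemma sharply_transitive_uniq (x : 'I_k -> T) (g h : {perm T}) :
  injective x -> g \in G -> h \in G -> (forall i, g (x i) = h (x i)) -> g = h.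
Proof.
move=> x_inj Gg Gh ghx.
have gx_inj : injective (g \o x) by move=> i j /perm_inj/x_inj.
have [g0 [_ g0_uniq]] := STG x_inj gx_inj.
by rewrite -(g0_uniq g) // (g0_uniq h) //; split=> // i; rewrite /= ghx.
Qed.

Lemma sharply_transitive_agree (g h : {perm T}) :
  g \in G -> h \in G -> k <= #|[set x | g x == h x]| -> g = h.
Proof.
move=> Gg Gh /exists_inj_ord[x x_inj gxhx].
by apply: (sharply_transitive_uniq x_inj) => // i; have := gxhx i; rewrite inE => /eqP.
Qed.

Lemma card_sharply_transitive : k <= #|T| -> #|G| = #|T| ^_ k.
Proof.
move=> /exists_inj_ord[x x_inj _].
pose phi (g : {perm T}) := [ffun i => g (x i)].
rewrite -[k]card_ord -card_inj_ffuns -(card_in_imset (f := phi)); last first.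
  move=> g h Gg Gh /ffunP phigh; apply: (sharply_transitive_uniq x_inj) => // i.
  by have := phigh i; rewrite !ffunE.
apply: eq_card => f; rewrite inE; apply/imsetP/injectiveP.
  by case=> g _ -> i j; rewrite !ffunE => /perm_inj/x_inj.
move=> f_inj; have [g [[Gg gx] _]] := STG x_inj f_inj.
by exists g => //; apply/ffunP => i; rewrite ffunE.
Qed.

End SharpTransitivity.

Lemma card_fix_mod_prime (T : finType) k (r : {perm T}) :
  prime k -> (r ^+ k = 1)%g -> #|T| = #|[set x | r x == x]| %[mod k].
Proof.
move=> k_pr rk1.
have kr : pgroup k <[r]>%g.
  by rewrite /pgroup -orderE (pnat_dvd _ (pnat_id k_pr)) // order_dvdn rk1.
have r_acts : [acts <[r]>%g, on [set: T] | 'P] by apply/actsP => g _ x; rewrite !inE.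
rewrite -cardsT (pgroup_fix_mod kr r_acts) setTI afix_cycle.
by congr (_ %% _); apply: eq_card => x; rewrite inE; apply/afix1P/eqP.
Qed.

Section HammingDistance.
Variable T : finType.
Implicit Types p q r : {perm T}.

Lemma hd_agree p q : hd p q = #|T| - #|[set x | p x == q x]|.
Proof. by rewrite /hd -(cardsC [set x | p x == q x]) addKn; apply: eq_card => x; rewrite !inE. Qed.

Lemma hd_eq0 p q : (hd p q == 0) = (p == q).
Proof.
rewrite /hd cards_eq0; apply/eqP/eqP => [/setP pq|->].
  by apply/permP => x; apply/eqP; have := pq x; rewrite !inE => /negbFE.
by apply/setP => x; rewrite !inE eqxx.
Qed.

Lemma hd_refl p : hd p p = 0.
Proof. by apply/eqP; rewrite hd_eq0. Qed.

Lemma hd_mulr p q r : hd (p * r)%g (q * r)%g = hd p q.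
Proof. by apply: eq_card => x; rewrite !inE !permM (inj_eq perm_inj). Qed.


End HammingDistance.

Section Triangle.
Variables (T : finType) (F : T).
Implicit Types p q : {perm T}.

Lemma tri_id p x : x != F -> x != (p^-1)%g F -> tri F p x = p x.
Proof. by move=> xF xa; rewrite permE /tri_fun (negbTE xF) (negbTE xa). Qed.

Lemma tri_preimF p : (p^-1)%g F != F -> tri F p ((p^-1)%g F) = p F.
Proof. by move=> aF; rewrite permE /tri_fun (negbTE aF) eqxx. Qed.

Lemma tri_fix p : p F = F -> tri F p = p.
Proof.
move=> pF; apply/permP => x; rewrite permE tri_funE.
have -> : (p^-1)%g F = F by rewrite -{1}pF permK.
by rewrite tperm1 perm1.
Qed.

Lemma trimE p (x : OmF F) : val (trim F p x) = tri F p (val x).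
Proof. by rewrite permE. Qed.

Lemma hd_trim p q : hd (trim F p) (trim F q) = hd (tri F p) (tri F q).
Proof.
rewrite /hd -(card_imset _ val_inj); apply: eq_card => x; rewrite inE.
apply/imsetP/idP => [[y]|pqx].
  rewrite inE => pqy ->; apply: contra pqy => /eqP pqy.
  by apply/eqP/val_inj; rewrite !trimE pqy.
have xF : x != F by apply: contra pqx => /eqP ->; rewrite !tri_F.
exists (exist _ x xF) => //; rewrite inE; apply: contra pqx.
by move=> /eqP/(congr1 val); rewrite !trimE => ->.
Qed.

Lemma tri_agree_sub p q :
  [set x | tri F p x == tri F q x] \subset
    [set x | p x == q x] :|: [set F; (p^-1)%g F; (q^-1)%g F].
Proof.
apply/subsetP => x; rewrite !inE -!orbA.
case: (eqVneq x F) => [_|xF]; first by rewrite orbT.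
case: (eqVneq x ((p^-1)%g F)) => [_|xa]; first by rewrite orbT.
case: (eqVneq x ((q^-1)%g F)) => [_|xb]; first by rewrite !orbT.
by rewrite !orbF !tri_id.
Qed.

Lemma card_OmF : #|(OmF F : finType)| = #|T|.-1.
Proof. by rewrite card_sig cardC1. Qed.

End Triangle.

Section ThreePoints.
Variables (T : finType) (x y z : T).

Lemma card_set3_le : #|[set x; y; z]| <= 3.
Proof. by rewrite setUC cardsU1 cards2; case: (_ \notin _); case: (_ != _). Qed.

Lemma card_set3 : #|[set x; y; z]| = 3 -> [/\ x != y, x != z & y != z].
Proof.
rewrite [in LHS]setUC cardsU1 cards2 !inE negb_or (eq_sym x z) (eq_sym y z).
by case: (z != x); case: (z != y); case: (x != y).
Qed.

End ThreePoints.

Section SharplyFiveTransitiveOnTwelve.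
Variables (T : finType) (G : {group {perm T}}).
Hypotheses (cardT : #|T| = 12) (STG : sharply_transitive 5 G).

Lemma fix4_no_3cycle r x :
  r \in G -> #|[set y | r y == y]| = 4 -> r x != x -> (r ^+ 3)%g x != x.
Proof.
move=> Gr fix4 rx; apply/negP => /eqP r3x.
have r3 : (r ^+ 3 = 1)%g.
  apply: (sharply_transitive_agree STG); rewrite ?groupX ?group1 //.
  apply: leq_trans (subset_leq_card (_ : x |: [set y | r y == y] \subset _)).
    by rewrite cardsU1 fix4 inE rx.
  apply/subsetP => y; rewrite !inE perm1 => /orP[/eqP ->|/eqP ry].
    by rewrite r3x.
  by rewrite !expgS expg0 mulg1 !permM !ry.
by have := card_fix_mod_prime (isT : prime 3) r3; rewrite cardT fix4.
Qed.

Lemma agree4_cross F p q :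
  p \in G -> q \in G -> #|[set x | p x == q x]| = 4 ->
  p F = q ((p^-1)%g F) -> p ((q^-1)%g F) = q F -> p F = q F.
Proof.
move=> Gp Gq agree4 pFqa pbqF; apply/eqP/negPn/negP => pqF.
set a := (p^-1)%g F in pFqa; set b := (q^-1)%g F in pbqF.
pose r := (p * q^-1)%g.
have rE x : r x = (q^-1)%g (p x) by rewrite permM.
have Gr : r \in G by rewrite groupM ?groupV.
clearbody r.
have fixr : #|[set x | r x == x]| = 4.
  by rewrite -agree4; apply: eq_card => x; rewrite !inE rE (canF_eq (permKV q)).
have rF : r F = a by rewrite rE pFqa permK.
have ra : r a = b by rewrite rE permKV.
have rb : r b = F by rewrite rE pbqF permK.
have rFF : r F != F.
  by rewrite rF; apply: contra pqF => /eqP aF; rewrite pFqa aF.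
apply/negP: (fix4_no_3cycle Gr fixr rFF).
by rewrite !expgS expg0 mulg1 !permM rF ra rb eqxx.
Qed.

Lemma hd_tri_ge6 (F : T) p q :
  p \in G -> q \in G -> p != q -> 6 <= hd (tri F p) (tri F q).
Proof.
move=> Gp Gq pq.
set a := (p^-1)%g F; set b := (q^-1)%g F.
set E := [set x | p x == q x]; set S := [set x | tri F p x == tri F q x].
have E4 : #|E| <= 4.
  by rewrite leqNgt; apply: contra pq => /(sharply_transitive_agree STG Gp Gq) ->.
rewrite hd_agree cardT -/S; suff : #|S| <= 6 by lia.
rewrite leqNgt; apply/negP => S7.
set D := S :\: E.
have SED : #|S| <= #|E| + #|D|.
  by rewrite -(cardsID E S) leq_add2r subset_leq_card // subsetIr.
have DFab : D \subset [set F; a; b].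
  apply/subsetP => x; rewrite inE => /andP[xE xS].
  by have := subsetP (tri_agree_sub F p q) x xS; rewrite in_setU (negbTE xE).
have D3 : 3 <= #|D| by lia.
have Fab3 : #|[set F; a; b]| = 3.
  by apply/eqP; rewrite eqn_leq card_set3_le (leq_trans D3 (subset_leq_card DFab)).
have /eqP DE : D == [set F; a; b] by rewrite eqEcard DFab Fab3.
have [Fa Fb ab] := card_set3 Fab3.
have : [/\ F \in D, a \in D & b \in D] by rewrite DE !inE !eqxx ?orbT.
rewrite !inE => -[/andP[FE _] /andP[_ aS] /andP[_ bS]].
have pFqa : p F = q a by rewrite -tri_preimF 1?eq_sym // (eqP aS) tri_id // eq_sym.
have pbqF : p b = q F.
  by rewrite -(tri_preimF (p := q)) 1?eq_sym // -(eqP bS) tri_id // eq_sym.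
have E4' : #|E| = 4 by have := subset_leq_card DFab; lia.
by rewrite (agree4_cross Gp Gq E4' pFqa pbqF) eqxx in FE.
Qed.

End SharplyFiveTransitiveOnTwelve.

Section TransferPerm.
Variables (U V : finType) (f : U -> V) (g : V -> U).
Hypotheses (fK : cancel f g) (gK : cancel g f).

Lemma transfer_perm_subproof (s : {perm U}) : injective (f \o s \o g).
Proof. by move=> i j /(can_inj fK)/perm_inj/(can_inj gK). Qed.

Definition transfer_perm (s : {perm U}) : {perm V} := perm (@transfer_perm_subproof s).

Lemma transfer_permE s u : transfer_perm s (f u) = f (s u).
Proof. by rewrite permE /= fK. Qed.

Lemma transfer_perm_inj : injective transfer_perm.
Proof. by move=> s t st; apply/permP => u; apply: (can_inj fK); rewrite -!transfer_permE st. Qed.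

Lemma hd_transfer_perm s t : hd (transfer_perm s) (transfer_perm t) = hd s t.
Proof.
rewrite /hd -(card_imset _ (can_inj fK)); apply: eq_card => v.
rewrite -[v]gK (mem_imset _ _ (can_inj fK)) !inE.
by rewrite !transfer_permE (can_eq fK).
Qed.

End TransferPerm.

Definition is_perm_code (U : finType) (d : nat) (C : {set {perm U}}) : Prop :=
  forall p q, p \in C -> q \in C -> p != q -> d <= hd p q.

Lemma card_perm_code_le_Mnd (U : finType) n d (C : {set {perm U}}) :
  is_perm_code d C -> #|U| = n -> #|C| <= Mnd n d.
Proof.
move=> Cd cardU.
pose f (u : U) := cast_ord cardU (enum_rank u).
pose g (i : 'I_n) := enum_val (cast_ord (esym cardU) i).
have fK : cancel f g by move=> u; rewrite /f /g cast_ordK enum_rankK.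
have gK : cancel g f by move=> i; rewrite /f /g enum_valK cast_ordKV.
rewrite -(card_imset _ (@transfer_perm_inj _ _ _ _ fK gK)).
apply: (@leq_bigmax_cond _ (perm_code d) (fun A => #|A|)).
apply/'forall_implyP => _ /imsetP[s Cs ->].
apply/'forall_implyP => _ /imsetP[t Ct ->].
apply/implyP => st; rewrite hd_transfer_perm; apply: Cd => //.
by apply: contra st => /eqP ->.
Qed.

Lemma card_perm_code_le_shorten (U : finType) n d (C : {set {perm U}}) :
  is_perm_code d C -> #|U| = n.+1 -> #|C| <= n.+1 * Mnd n d.
Proof.
move=> Cd cardU; have /card_gt0P[x0 _] : 0 < #|U| by rewrite cardU.
pose Cy y := [set s in C | s x0 == y].
have [y _ Cy_max] := @arg_maxnP U x0 xpredT (fun y => #|Cy y|) isT.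
have C_le : #|C| <= n.+1 * #|Cy y|.
  rewrite -sum1_card (partition_big (fun s : {perm U} => s x0) xpredT) //=.
  rewrite -cardU -sum_nat_const; apply: leq_sum => z _.
  by rewrite sum1dep_card; apply: Cy_max.
apply: (leq_trans C_le); rewrite leq_pmul2l //.
pose phi s := trim x0 (s * tperm y x0)%g.
have hd_phi s u : s \in Cy y -> u \in Cy y -> hd (phi s) (phi u) = hd s u.
  rewrite !inE => /andP[_ /eqP sy] /andP[_ /eqP uy].
  by rewrite hd_trim !tri_fix ?hd_mulr // permM ?sy ?uy tpermL.
have phi_inj : {in Cy y &, injective phi}.
  by move=> s u Cys Cyu /eqP; rewrite -hd_eq0 hd_phi // hd_eq0 => /eqP.
rewrite -(card_in_imset phi_inj); apply: card_perm_code_le_Mnd; last first.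
  by rewrite card_OmF cardU.
move=> _ _ /imsetP[s Cys ->] /imsetP[u Cyu ->] ne; rewrite hd_phi //.
move: Cys Cyu; rewrite !inE => /andP[Cs _] /andP[Cu _].
by apply: Cd => //; apply: contra ne => /eqP ->.
Qed.

Theorem proposition17 (T : finType) (F : T) (G : {group {perm T}}) :
  #|T| = 12 -> sharply_transitive 5 G ->
  [/\ (forall p q, p \in G -> q \in G -> trim F p != trim F q ->
         6 <= hd (trim F p) (trim F q)),
      #|G| <= Mnd 11 6 /\ #|G| = 95040
    & 8640 <= Mnd 10 6].
Proof.
move=> cardT STG.
have hdG p q : p \in G -> q \in G -> p != q -> 6 <= hd (trim F p) (trim F q).
  by move=> Gp Gq pq; rewrite hd_trim (hd_tri_ge6 cardT STG).
have trim_inj : {in G &, injective (trim F)}.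
  move=> p q Gp Gq pq; apply/eqP/negPn/negP => /(hdG p q Gp Gq).
  by rewrite pq hd_refl.
have code : is_perm_code 6 (trim F @: G).
  move=> _ _ /imsetP[p Gp ->] /imsetP[q Gq ->] pq.
  by apply: hdG => //; apply: contra pq => /eqP ->.
have cardC : #|trim F @: G| = #|G| := card_in_imset trim_inj.
have cardOm : #|(OmF F : finType)| = 11 by rewrite card_OmF cardT.
have cardG : #|G| = 95040 by rewrite (card_sharply_transitive STG) cardT.
split.
- by move=> p q Gp Gq pq; apply: hdG => //; apply: contra pq => /eqP ->.
- by split=> //; rewrite -cardC (card_perm_code_le_Mnd code cardOm).
- rewrite -(@leq_pmul2l 11) //; apply: leq_trans (card_perm_code_le_shorten code cardOm).
  by rewrite cardC cardG.
Qed.
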